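(* Let $n\ge 5$ and let $f$ be an RDF of $P(n,2)$ of weight $\gamma_R(P(n,2))$ with $|V_2|$ minimum among all such minimum-weight RDFs. For any index $i$, if $r_f(V'(i,7)) \le 0.5$, then $u_{i+3}\notin V_2$.
   Context: For integers $n \ge 3$ and $1 \le k < n/2$, the generalized Petersen graph $P(n,k)$ has vertex set $\{v_i, u_i : 0 \le i \le n-1\}$ and edge set $\{v_iv_{i+1},\ v_iu_i,\ u_iu_{i+k} : 0 \le i \le n-1\}$, with subscripts taken modulo $n$. A Roman domination function (RDF) of a graph $G$ is a function $f: V(G)\to\{0,1,2\}$ such that every vertex $u$ with $f(u)=0$ is adjacent to at least one vertex $v$ with $f(v)=2$. Its weight is $\sum_{u\in V(G)} f(u)$; $\gamma_R(G)$ is the minimum weight of an RDF of $G$. For an RDF $f$ write $V_i=\{w: f(w)=i\}$, $i=0,1,2$. Define $g_f(w)=0.5$ if $w\in V_2$, $g_f(w)=1$ if $w\in V_1$, and $g_f(w)=0.5\,|N(w)\cap V_2|$ if $w\in V_0$, where $N(w)$ is the set of neighbors of $w$. Let $r_f(w)=g_f(w)-0.5$ and, for $S\subseteq V(P(n,2))$, $r_f(S)=\sum_{w\in S} r_f(w)$. For an integer $i$ and $t\ge 1$, $V'(i,t)=\{v_j,u_j : i\le j\le i+t-1\}$ (subscripts modulo $n$). *)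

From HB Require Import structures.
From mathcomp Require Import all_boot all_order all_algebra.
Import Order.TTheory GRing.Theory Num.Theory.

(* Vertices of P(n,k): (false, i) is v_i, (true, i) is u_i, with i : 'I_n. *)
Definition gpV (n : nat) : finType := (bool * 'I_n)%type.

Definition v_vtx {n} (w : gpV n) : bool := ~~ w.1.
Definition u_vtx {n} (w : gpV n) : bool := w.1.

Definition gp_adj (n k : nat) (x y : gpV n) : bool :=
  match x.1, y.1 with
  | false, false => (val y.2 == (val x.2 + 1) %% n) || (val x.2 == (val y.2 + 1) %% n)
  | false, true | true, false => val x.2 == val y.2
  | true, true => (val y.2 == (val x.2 + k) %% n) || (val x.2 == (val y.2 + k) %% n)
  end.

Definition is_RDF (n k : nat) (f : gpV n -> nat) : Prop :=
  (forall w, f w <= 2)%N /\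
  (forall w, f w = 0%N -> exists x, gp_adj n k w x /\ f x = 2%N).

Definition weight (n : nat) (f : gpV n -> nat) : nat := (\sum_(w : gpV n) f w)%N.

Definition is_gammaR_fun (n k : nat) (f : gpV n -> nat) : Prop :=
  is_RDF n k f /\ forall g, is_RDF n k g -> (weight n f <= weight n g)%N.

Definition V2 (n : nat) (f : gpV n -> nat) : {set gpV n} := [set w | f w == 2%N].

Local Open Scope ring_scope.

Definition g_f (n k : nat) (f : gpV n -> nat) (w : gpV n) : rat :=
  if f w == 2%N then 1 / 2
  else if f w == 1%N then 1
  else (#|[set x | gp_adj n k w x & f x == 2%N]|)%:R / 2.

Definition r_f (n k : nat) (f : gpV n -> nat) (w : gpV n) : rat := g_f n k f w - 1 / 2.

Definition inVp (n : nat) (i t : nat) (w : gpV n) : bool :=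
  [exists j : 'I_t, val w.2 == (i + j) %% n]%N.

Definition r_f_Vp (n k : nat) (f : gpV n -> nat) (i t : nat) : rat :=
  \sum_(w : gpV n | inVp n i t w) r_f n k f w.

(* Suppose u_{i+3} is labelled 2.  Minimality of the weight, and then of |V_2|,
   imposes local rules on f: a 0 has a neighbour labelled 2, a 1 has none, and a
   2 has none either and at least two private neighbours (otherwise lowering its
   label and raising its private neighbours to 1 gives a minimum RDF with fewer
   2s).  Every r_f(w) is a nonnegative multiple of 1/2, so r_f(V'(i,7)) <= 1/2
   leaves at most one vertex of the window with r_f(w) > 0.  On the vertices
   v_j, u_j with |j - (i+3)| <= 6 these finitely many rules are contradictory,
   which an exhaustive search over the labellings of those vertices confirms; for
   n = 5, 6 the indices wrap around and the search runs on the whole graph. *)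

From HB Require Import structures.
From mathcomp Require Import all_boot all_order all_algebra zify.
Import Order.TTheory GRing.Theory Num.Theory.

Set Implicit Arguments. Unset Strict Implicit. Unset Printing Implicit Defensive.

Lemma all_flatten (T : Type) (a : pred T) (ss : seq (seq T)) :
  all a (flatten ss) = all (all a) ss.
Proof. by elim: ss => //= s ss IH; rewrite all_cat IH. Qed.

Lemma modn_eq_close n d a b : d < n -> a <= b + d -> b <= a + d ->
  (a %% n == b %% n) = (a == b).
Proof.
wlog ab : a b / a <= b => [hyp d_lt ab_d ba_d|d_lt _ ba_d].
  by case: (leqP a b) => [|/ltnW] ?; [|rewrite eq_sym [RHS]eq_sym]; apply: hyp.
move: ba_d; rewrite -(subnKC ab); set e := b - a => ae_d.
rewrite -{1}[a]addn0 eqn_modDl -{1}[a]addn0 eqn_add2l mod0n modn_small //.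
by apply: leq_ltn_trans d_lt; rewrite -(leq_add2l a).
Qed.

Lemma card_adj_count (T : finType) (adj : rel T) x (ys : seq T) (P : pred T) :
  (forall w, adj x w = (w \in ys)) -> uniq ys -> #|[set w | adj x w & P w]| = count P ys.
Proof.
move=> adjE ys_uniq; rewrite -size_filter -(card_uniqP (filter_uniq P ys_uniq)).
by apply: eq_card => w; rewrite !inE mem_filter adjE andbC.
Qed.

(** * Consequences of minimality *)

Lemma gp_adj_sym n k : symmetric (gp_adj n k).
Proof. by case=> [[] a] [[] b]; rewrite /gp_adj /= 1?orbC // eq_sym. Qed.

Definition nbr2 n k (f : gpV n -> nat) (w : gpV n) : {set gpV n} :=
  [set z | gp_adj n k w z & f z == 2].

Definition private_nbrs n k (f : gpV n -> nat) (x : gpV n) : {set gpV n} :=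
  [set y | gp_adj n k x y & (f y == 0) && (#|nbr2 k f y| == 1)].

Lemma nbr2_gt0 n k f w : is_RDF n k f -> f w = 0 -> 0 < #|nbr2 k f w|.
Proof.
move=> [_ f_dom] /f_dom [z [wz fz]]; apply/card_gt0P; exists z.
by rewrite inE wz fz.
Qed.

Definition twice_r n k (f : gpV n -> nat) (w : gpV n) : nat :=
  if f w == 2 then 0 else if f w == 1 then 1 else #|nbr2 k f w|.-1.

Lemma r_fE n k f w : is_RDF n k f -> r_f n k f w = ((twice_r k f w)%:R / 2)%R.
Proof.
move=> f_rdf; rewrite /r_f /g_f /twice_r -/(nbr2 k f w).
case: eqP => [_|f_ne2]; first by rewrite mul0r subrr.
case: eqP => [_|f_ne1]; first by rewrite {1}(splitr 1) addrK.
have fw0 : f w = 0 by have := f_rdf.1 w; case: (f w) f_ne2 f_ne1 => [|[|[|]]].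
by rewrite -(prednK (nbr2_gt0 f_rdf fw0)) -mulrBl -natr1 addrK.
Qed.

Lemma gamma_of_weight_le n k f g : is_gammaR_fun n k f -> is_RDF n k g ->
  weight n g <= weight n f -> is_gammaR_fun n k g.
Proof. by move=> [_ f_min] g_rdf gf; split=> // h /f_min; apply: leq_trans. Qed.

Lemma gamma_one_nbr2 n k f w : is_gammaR_fun n k f -> f w = 1 -> nbr2 k f w = set0.
Proof.
move=> [[f_le2 f_dom] f_min] fw1; apply/setP => z; rewrite !inE.
apply/negP => /andP [wz /eqP fz2].
pose g x := if x == w then 0 else f x.
have g2 y : f y = 2 -> g y = 2 by rewrite /g; case: eqP => // ->; rewrite fw1.
have g_rdf : is_RDF n k g.
  split=> x; rewrite {1}/g.
    by case: eqP => // _; apply: f_le2.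
  case: eqP => [-> _|_ /f_dom [y [xy fy2]]]; first by exists z; rewrite wz g2.
  by exists y; rewrite xy g2.
have g_weight : weight n g + 1 = weight n f.
  rewrite /weight [in RHS](bigD1 w) //= (bigD1 w) //= /g eqxx fw1 add0n addnC.
  by congr (_ + _); apply: eq_bigr => x /negbTE ->.
by have := f_min g g_rdf; rewrite -g_weight addn1 ltnn.
Qed.

Section Demotion.

Variables (n k : nat) (f : gpV n -> nat) (x : gpV n).
Hypotheses (f_rdf : is_RDF n k f) (fx2 : f x = 2) (x_noloop : ~~ gp_adj n k x x).

(* [x] gives up its 2: it keeps a 1 only if no neighbour can dominate it, and
   its private neighbours, which lose their only dominator, receive a 1. *)
Definition demote (w : gpV n) : nat :=
  if w == x then (nbr2 k f x == set0 : nat) else if w \in private_nbrs k f x then 1 else f w.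

Lemma private_nbrs_f0 y : y \in private_nbrs k f x -> f y = 0.
Proof. by rewrite inE => /and3P [_ /eqP]. Qed.

Lemma demote2 z : f z = 2 -> z != x -> demote z = 2.
Proof.
move=> fz2 /negbTE zx; rewrite /demote zx.
by case: ifP => // /private_nbrs_f0; rewrite fz2.
Qed.

Lemma demote_rdf : is_RDF n k demote.
Proof.
have [f_le2 f_dom] := f_rdf.
split=> [w|w]; rewrite {1}/demote.
  by case: ifP => _; [case: (_ == _) | case: ifP => _ //; apply: f_le2].
case: eqP => [-> | /eqP wx].
  have [//|/set0Pn [z]] := eqVneq (nbr2 k f x) set0.
  rewrite inE => /andP [xz /eqP fz2] _.
  by exists z; rewrite xz demote2 //; apply: contraNneq x_noloop => zx; rewrite -{2}zx.
case: ifP => // w_priv fw0; have [z [wz fz2]] := f_dom w fw0.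
case: (eqVneq z x) => [zx|zx]; last by exists z; rewrite wz demote2.
have x_nbr2 : x \in nbr2 k f w by rewrite inE -zx wz fz2.
have : 0 < #|nbr2 k f w :\ x|.
  move: w_priv; rewrite inE gp_adj_sym -{1}zx wz fw0 (cardsD1 x) x_nbr2.
  by case: #|nbr2 k f w :\ x|.
case/card_gt0P=> z'; rewrite !inE => /and3P [z'x wz' /eqP fz'2].
by exists z'; rewrite wz' demote2.
Qed.

Lemma weight_demote :
  weight n demote + 2 = weight n f + (nbr2 k f x == set0) + #|private_nbrs k f x|.
Proof.
have x_priv : x \notin private_nbrs k f x.
  by apply/negP => /private_nbrs_f0; rewrite fx2.
have sum_priv : \sum_(w | w != x) (w \in private_nbrs k f x : nat) = #|private_nbrs k f x|.
  rewrite -sum1_card big_mkcond [RHS]big_mkcond; apply: eq_bigr => w _.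
  by case: eqP => [->|_]; [rewrite (negbTE x_priv) | case: (_ \in _)].
have sum_off_x : \sum_(w | w != x) demote w =
    \sum_(w | w != x) f w + \sum_(w | w != x) (w \in private_nbrs k f x : nat).
  rewrite -big_split /=; apply: eq_bigr => w /negbTE wx; rewrite /demote wx.
  by case: (boolP (_ \in _)) => [/private_nbrs_f0 ->|_]; rewrite ?addn0.
rewrite /weight (bigD1 x) //= [in RHS](bigD1 x) //= {1}/demote eqxx fx2.
rewrite sum_off_x sum_priv /=; lia.
Qed.

Lemma card_V2_demote : #|V2 n demote| < #|V2 n f|.
Proof.
have x_V2 : x \in V2 n f by rewrite inE fx2.
rewrite [X in _ < X](cardsD1 x) x_V2 ltnS; apply: subset_leq_card.
apply/subsetP => w; rewrite !inE /demote.
case: (eqVneq w x) => [->|_ /=]; first by case: (nbr2 k f x == set0).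
by case: ifP.
Qed.

End Demotion.

Lemma gamma_two_private_nbrs n k f x :
  is_gammaR_fun n k f -> (forall g, is_gammaR_fun n k g -> #|V2 n f| <= #|V2 n g|) ->
  ~~ gp_adj n k x x -> #|[set y | gp_adj n k x y]| <= 3 -> f x = 2 ->
  nbr2 k f x = set0 /\ 1 < #|private_nbrs k f x|.
Proof.
move=> f_gamma f_min x_noloop deg3 fx2.
have demote_heavy : (nbr2 k f x == set0) + #|private_nbrs k f x| <= 2 -> False.
  move=> le2; have g_light : weight n (demote k f x) <= weight n f.
    by rewrite -(leq_add2r 2) weight_demote // -addnA leq_add2l.
  have g_gamma := gamma_of_weight_le f_gamma (demote_rdf f_gamma.1 x_noloop) g_light.
  by have := f_min _ g_gamma; rewrite leqNgt card_V2_demote.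
have [nbr0|nbr_ne] := eqVneq (nbr2 k f x) set0.
  split=> //; rewrite ltnNge; apply/negP => priv_le1.
  by apply: demote_heavy; rewrite nbr0 eqxx add1n ltnS.
have /set0Pn [z] := nbr_ne; rewrite inE => /andP [xz /eqP fz2].
have priv_lt : #|private_nbrs k f x| < #|[set y | gp_adj n k x y]|.
  apply: proper_card; rewrite properE; apply/andP; split.
    by apply/subsetP => y; rewrite !inE => /andP [].
  by apply/subsetPn; exists z; rewrite !inE ?xz // fz2.
by case: demote_heavy; rewrite (negbTE nbr_ne) add0n -ltnS (leq_trans priv_lt).
Qed.

Lemma twice_r_pair n k f i t x y : is_RDF n k f -> (r_f_Vp n k f i t <= 1 / 2)%R ->
  inVp n i t x -> inVp n i t y -> x != y -> twice_r k f x + twice_r k f y <= 1.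
Proof.
move=> f_rdf r_le x_in y_in xy.
have r_ge0 w : (0 <= r_f n k f w)%R by rewrite r_fE // divr_ge0 ?ler0n.
have : (r_f n k f x + r_f n k f y <= 1 / 2)%R.
  apply: le_trans r_le; rewrite /r_f_Vp (bigD1 x) //= (bigD1 y) /=; last by rewrite y_in eq_sym.
  by rewrite addrA lerDl sumr_ge0.
by rewrite !r_fE // -mulrDl -natrD ler_pM2r ?invr_gt0 // -[1%R]/(1%:R)%R ler_nat.
Qed.

(** * Local constraints *)

(* A star is a vertex together with the list of its neighbours.  Constraints
   see a labelling only through stars, so they can be transported along any map
   of vertices ([holds_cmap]). *)
Definition star (X : Type) := (X * seq X)%type.

Inductive constraint (X : Type) :=
  | Dominated of star X
  | OneIsolated of star X
  | TwoPrivate of star X & seq (star X)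
  | RPair of star X & star X
  | IsTwo of X.

Section Constraints.

Variables X Y : eqType.
Implicit Types (h : X -> nat) (s : star X) (c : constraint X).

Definition count2 h (ys : seq X) := count (fun y => h y == 2) ys.

Definition private h s := (h s.1 == 0) && (count2 h s.2 == 1).

Definition star_twice_r h s :=
  if h s.1 == 2 then 0 else if h s.1 == 1 then 1 else (count2 h s.2).-1.

Definition holds h c :=
  match c with
  | Dominated s => (h s.1 == 0) ==> (0 < count2 h s.2)
  | OneIsolated s => (h s.1 == 1) ==> (count2 h s.2 == 0)
  | TwoPrivate s ss => (h s.1 == 2) ==> (count2 h s.2 == 0) && (1 < count (private h) ss)
  | RPair s s' => star_twice_r h s + star_twice_r h s' <= 1
  | IsTwo x => h x == 2
  end.

Definition star_reads s := s.1 :: s.2.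

Definition reads c :=
  match c with
  | Dominated s | OneIsolated s => star_reads s
  | TwoPrivate s ss => star_reads s ++ flatten (map star_reads ss)
  | RPair s s' => star_reads s ++ star_reads s'
  | IsTwo x => [:: x]
  end.

Lemma holds_eq_in h1 h2 c : {in reads c, h1 =1 h2} -> holds h1 c = holds h2 c.
Proof.
have star_eq s : {in star_reads s, h1 =1 h2} ->
    (h1 s.1 = h2 s.1) /\ (count2 h1 s.2 = count2 h2 s.2).
  move=> eq12; split; first by rewrite eq12 ?mem_head.
  by apply: eq_in_count => y y_in; rewrite /= eq12 // inE y_in orbT.
have cat_in (l1 l2 : seq X) :
    {in l1 ++ l2, h1 =1 h2} -> {in l1, h1 =1 h2} /\ {in l2, h1 =1 h2}.
  by move=> eq12; split=> y y_in; apply: eq12; rewrite mem_cat y_in ?orbT.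
case: c => [s|s|s ss|s s'|x] eq12 /=.
- by have [-> ->] := star_eq s eq12.
- by have [-> ->] := star_eq s eq12.
- have [/star_eq [-> ->] eq_ss] := cat_in _ _ eq12.
  congr (_ ==> _ && (1 < _)); apply: eq_in_count => s' s'_in.
  have [] // := star_eq s'; last by rewrite /private => -> ->.
  by move=> y y_in; apply: eq_ss; apply/flatten_mapP; exists s'.
- have [/star_eq [e1 e2] /star_eq [e1' e2']] := cat_in _ _ eq12.
  by rewrite /star_twice_r e1 e2 e1' e2'.
- by rewrite eq12 ?mem_head.
Qed.

End Constraints.

Section ConstraintMap.

Variables X Y : eqType.
Variable g : X -> Y.

Definition star_map (s : star X) : star Y := (g s.1, map g s.2).

Definition cmap (c : constraint X) : constraint Y :=
  match c with
  | Dominated s => Dominated (star_map s)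
  | OneIsolated s => OneIsolated (star_map s)
  | TwoPrivate s ss => TwoPrivate (star_map s) (map star_map ss)
  | RPair s s' => RPair (star_map s) (star_map s')
  | IsTwo x => IsTwo (g x)
  end.

Lemma holds_cmap (h : Y -> nat) c : holds h (cmap c) = holds (h \o g) c.
Proof.
have count2_map ys : count2 h (map g ys) = count2 (h \o g) ys by rewrite /count2 count_map.
have private_map s : private h (star_map s) = private (h \o g) s.
  by rewrite /private count2_map.
have star_twice_r_map s : star_twice_r h (star_map s) = star_twice_r (h \o g) s.
  by rewrite /star_twice_r count2_map.
case: c => [s|s|s ss|s s'|x] /=; rewrite ?count2_map ?star_twice_r_map // count_map.
by rewrite (@eq_count _ (preim star_map (private h)) _ private_map).
Qed.

Lemma reads_cmap c : reads (cmap c) = map g (reads c).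
Proof.
case: c => [s|s|s ss|s s'|x] //=; rewrite map_cat // map_flatten -!map_comp.
by congr (_ :: _ ++ flatten _); apply: eq_map.
Qed.

End ConstraintMap.

(** * Refutation by exhaustive search *)

Definition look (r : seq nat) (i : nat) : nat := nth 0 r i.

Definition ready k (c : constraint nat) : bool := all (fun i => i < k) (reads c).

Lemma holds_look_cat r s c : ready (size r) c -> holds (look (r ++ s)) c = holds (look r) c.
Proof.
by move=> /allP c_ready; apply: holds_eq_in => i /c_ready i_lt; rewrite /look nth_cat i_lt.
Qed.

Section Refutation.

Variable bks : seq (seq (constraint nat)).

Definition violated (r : seq nat) (c : constraint nat) : bool :=
  ready (size r) c && ~~ holds (look r) c.

Lemma violated_cat r s c : violated r c -> violated (r ++ s) c.
Proof.
case/andP=> c_ready c_fails; rewrite /violated holds_look_cat // c_fails andbT.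
by apply: sub_all c_ready => i /leq_trans; apply; rewrite size_cat leq_addr.
Qed.

(* [vm_compute] evaluates both arguments of [||]; the if-then-else lets it prune. *)
Fixpoint refutes fuel (r : seq nat) : bool :=
  if has (violated r) (nth [::] bks (size r).-1) then true
  else if fuel is k.+1 then all (fun v => refutes k (rcons r v)) [:: 0; 1; 2]
  else false.

Lemma refutes_violated fuel r s : refutes fuel r -> size s = fuel -> all (fun v => v <= 2) s ->
  exists k, has (violated (r ++ s)) (nth [::] bks k).
Proof.
elim: fuel r s => [|fuel IH] r s /=.
  by case: ifP => // viol _ s0 _; exists (size r).-1; rewrite (size0nil s0) cats0.
case: ifP => [viol _ _ _|_ /and4P [r0 r1 r2 _]].
  exists (size r).-1; apply: sub_has viol => c; exact: violated_cat.
case: s => [|v s] //= [s_size] /andP [v_le2 s_le2].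
have r_v : refutes fuel (rcons r v) by case: v v_le2 => [|[|[|]]].
by have [k] := IH _ s r_v s_size s_le2; rewrite cat_rcons; exists k.
Qed.

End Refutation.

(* Bucket [k] holds the constraints whose last slot is [k]; [refutes] checks
   them as soon as slot [k] is filled. *)
Definition level (c : constraint nat) : nat := foldr maxn 0 (reads c).

Definition buckets K (cs : seq (constraint nat)) :=
  mkseq (fun k => [seq c <- cs | level c == k]) K.

Definition compile (X : eqType) (slots : seq X) (cs : seq (constraint X)) :=
  map (cmap (index^~ slots)) cs.

Lemma compile_sound (X : eqType) (slots : seq X) (h : X -> nat) c :
  holds h c -> ~~ violated (map h slots) (cmap (index^~ slots) c).
Proof.
move=> c_holds; apply/nandP; rewrite negbK size_map.
have [|_] := boolP (ready _ _); last by left.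
rewrite /ready reads_cmap all_map => /allP c_ready; right.
rewrite holds_cmap (holds_eq_in (h2 := h)) // => x /c_ready /=.
by rewrite index_mem => x_in; rewrite /look (nth_map x) ?index_mem // nth_index.
Qed.

Lemma refutes_sound (X : eqType) (slots : seq X) (cs : seq (constraint X)) (h : X -> nat) :
  (forall x, h x <= 2) -> all (holds h) cs ->
  ~~ refutes (buckets (size slots) (compile slots cs)) (size slots) [::].
Proof.
move=> h_le2 cs_hold; apply/negP => /(refutes_violated (s := map h slots)).
rewrite size_map all_map => /(_ erefl (introT allP (fun x _ => h_le2 x))) [k].
apply/negP; rewrite -all_predC /buckets.
case: (ltnP k (size slots)) => [k_lt|k_ge]; last by rewrite nth_default ?size_mkseq.
rewrite nth_mkseq // all_filter all_map; apply: sub_all cs_hold => c /= c_holds.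
by rewrite compile_sound ?implybT.
Qed.

(** * Local coordinates in P(n,2) *)

Definition pos := (bool * nat)%type.

Definition nbrs (p : pos) : seq pos :=
  let: (t, c) := p in
  if t then [:: (true, c.-2); (true, c.+2); (false, c)]
  else [:: (false, c.-1); (false, c.+1); (true, c)].

(* Position (t, c) stands for u_j (t = true) or v_j (t = false) with
   j = c + Q mod n.  The main proof takes Q = i + 10(n-1), so that c = 10..16 is
   V'(i,7) and (true, 13) is u_{i+3}; the offset 10(n-1) rather than -10 avoids
   truncated subtraction. *)
Definition vtx m Q (p : pos) : gpV m.+1 := (p.1, inord ((p.2 + Q) %% m.+1)).

Lemma vtxE m Q t (y : 'I_m.+1) p :
  ((t, y) == vtx m Q p) = (t == p.1) && (val y == (p.2 + Q) %% m.+1).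
Proof. by rewrite xpair_eqE -val_eqE /= inordK ?ltn_pmod. Qed.

Lemma vtx_eq m Q p q :
  (vtx m Q p == vtx m Q q) = (p.1 == q.1) && (p.2 %% m.+1 == q.2 %% m.+1).
Proof. by rewrite vtxE /= inordK ?ltn_pmod // eqn_modDr. Qed.

Lemma gp_adj_vtx m Q p : 1 < p.2 ->
  forall w, gp_adj m.+1 2 (vtx m Q p) w = (w \in map (vtx m Q) (nbrs p)).
Proof.
case: p => t [|[|c]] // _ [tw y].
rewrite /nbrs; case: t; rewrite /= !inE !vtxE /gp_adj /= inordK ?ltn_pmod //;
  case: tw => //=; rewrite ?orbF // modnDml addnAC orbC; congr (_ || _).
- by rewrite -(addn2 c) addnAC eqn_modDr (modn_small (ltn_ord y)) eq_sym.
- by rewrite addn2.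
- by rewrite -(addn1 c.+1) addnAC eqn_modDr (modn_small (ltn_ord y)) eq_sym.
- by rewrite addn1.
Qed.

Lemma uniq_vtx_nbrs m Q p : 4 < m.+1 -> 1 < p.2 ->
  uniq (vtx m Q p :: map (vtx m Q) (nbrs p)).
Proof.
move=> m_gt4; case: p => t [|[|c]] // _.
by case: t; rewrite /= !inE !vtx_eq /= !negb_or /= ?andbT !(modn_eq_close (d := 4)) //; lia.
Qed.

Definition pos_star (p : pos) : star pos := (p, nbrs p).

Section LocalView.

Variables (m Q : nat) (f : gpV m.+1 -> nat).
Hypothesis m_gt4 : 4 < m.+1.

Lemma card_adj_vtx_count p (P : pred (gpV m.+1)) : 1 < p.2 ->
  #|[set w | gp_adj m.+1 2 (vtx m Q p) w & P w]| = count (P \o vtx m Q) (nbrs p).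
Proof.
move=> p_gt1; have /andP [_ nbrs_uniq] := uniq_vtx_nbrs Q m_gt4 p_gt1.
by rewrite (card_adj_count _ (gp_adj_vtx Q p_gt1)) // count_map.
Qed.

Lemma card_nbr2_vtx p : 1 < p.2 ->
  #|nbr2 2 f (vtx m Q p)| = count2 (f \o vtx m Q) (nbrs p).
Proof. exact: card_adj_vtx_count. Qed.

Lemma twice_r_vtx p : 1 < p.2 ->
  twice_r 2 f (vtx m Q p) = star_twice_r (f \o vtx m Q) (pos_star p).
Proof. by move=> p_gt1; rewrite /twice_r card_nbr2_vtx. Qed.

Lemma deg_vtx p : 1 < p.2 -> #|[set w | gp_adj m.+1 2 (vtx m Q p) w]| = 3.
Proof.
move=> p_gt1; have := card_adj_vtx_count predT p_gt1.
rewrite count_predT (_ : size (nbrs p) = 3); last by case: p {p_gt1} => [[] ?].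
by move=> <-; apply: eq_card => w; rewrite !inE andbT.
Qed.

Lemma vtx_noloop p : 1 < p.2 -> ~~ gp_adj m.+1 2 (vtx m Q p) (vtx m Q p).
Proof. by move=> p_gt1; rewrite gp_adj_vtx //; case/andP: (uniq_vtx_nbrs Q m_gt4 p_gt1). Qed.

Lemma card_private_nbrs_vtx p : 3 < p.2 ->
  #|private_nbrs 2 f (vtx m Q p)| = count (private (f \o vtx m Q)) (map pos_star (nbrs p)).
Proof.
move=> p_gt3; rewrite card_adj_vtx_count ?(ltn_trans _ p_gt3) // count_map.
apply: eq_in_count => q q_nbr /=; rewrite /private /= card_nbr2_vtx //.
by case: p p_gt3 q_nbr => [[] c] /= c_gt3; rewrite !inE => /or3P [] /eqP -> /=; lia.
Qed.

End LocalView.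

Definition local_constraints (p : pos) : seq (constraint pos) :=
  [:: Dominated (pos_star p); OneIsolated (pos_star p);
      TwoPrivate (pos_star p) (map pos_star (nbrs p))].

Definition window : seq pos := [seq (t, c) | t <- [:: false; true], c <- iota 10 7].

(* For n <= 6 the window wraps around, and positions are identified modulo n.
   For larger n they are kept apart (x %% 0 = x): this only weakens the search,
   and the seven indices of the window stay distinct modulo n, as [RPair] needs. *)
Definition period n := if n <= 6 then n else 0.

Definition normp M (p : pos) : pos := (p.1, p.2 %% M).

Definition distinct_mod M (p q : pos) := (p.1 != q.1) || (p.2 %% M != q.2 %% M).

Definition window_pairs M : seq (pos * pos) :=
  [seq pq <- [seq (p, q) | p <- window, q <- window] | distinct_mod M pq.1 pq.2].

Definition search_order : seq pos := flatten
  [seq [:: (true, 13 - d); (false, 13 - d); (true, 13 + d); (false, 13 + d)] | d <- iota 0 7].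

Definition window_constraints M : seq (constraint pos) :=
  IsTwo (true, 13) :: flatten (map local_constraints search_order) ++
  [seq RPair (pos_star pq.1) (pos_star pq.2) | pq <- window_pairs M].

(* [undup] keeps last occurrences; reversing twice keeps the first ones, so
   the slots are filled in [search_order]. *)
Definition slots M : seq pos := rev (undup (rev (map (normp M) search_order))).

Definition refutation M : bool :=
  refutes (buckets (size (slots M))
             (compile (slots M) (map (cmap (normp M)) (window_constraints M))))
    (size (slots M)) [::].

Lemma refutation5 : refutation 5. Proof. by vm_compute. Qed.
Lemma refutation6 : refutation 6. Proof. by vm_compute. Qed.
Lemma refutation0 : refutation 0. Proof. by vm_compute. Qed.

Lemma refutation_period n : 4 < n -> refutation (period n).
Proof.
rewrite /period; case: ifP => [n_le6 n_gt4|_ _]; last exact: refutation0.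
have [->|->] : n = 5 \/ n = 6 by lia.
  exact: refutation5.
exact: refutation6.
Qed.

Lemma window_pos (p : pos) : p \in window -> 10 <= p.2 <= 16.
Proof. by case/allpairsP=> [[t c] [_ + ->]]; rewrite mem_iota /=; lia. Qed.

Lemma inVp_vtx m i (p : pos) : p \in window -> inVp m.+1 i 7 (vtx m (i + 10 * m) p).
Proof.
case: p => t c /window_pos /= /andP [c_ge c_le].
have c_lt : c - 10 < 7 by lia.
apply/existsP; exists (Ordinal c_lt); rewrite /= inordK ?ltn_pmod //.
by rewrite (_ : c + (i + 10 * m) = 10 * m.+1 + (i + (c - 10))) ?modnMDl //; lia.
Qed.

Lemma vtx_window_neq m Q (p q : pos) : p \in window -> q \in window ->
  distinct_mod (period m.+1) p q -> vtx m Q p != vtx m Q q.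
Proof.
move=> /window_pos p_win /window_pos q_win; rewrite vtx_eq negb_and /distinct_mod /period.
case: ifP => [_ //|/negbT]; rewrite -ltnNge !modn0 => m_gt6 distinct.
by rewrite (modn_eq_close (d := 6)); [exact: distinct | lia..].
Qed.

Lemma vtx_normp m Q p : vtx m Q (normp (period m.+1) p) = vtx m Q p.
Proof. by rewrite /vtx /normp /period /=; case: ifP => _; rewrite ?modn0 ?modnDml. Qed.

Section Validity.

Variables (m i : nat) (f : gpV m.+1 -> nat).
Hypotheses (m_gt4 : 4 < m.+1) (f_gamma : is_gammaR_fun m.+1 2 f).
Hypothesis f_min : forall g, is_gammaR_fun m.+1 2 g -> #|V2 m.+1 f| <= #|V2 m.+1 g|.
Hypothesis r_le : (r_f_Vp m.+1 2 f i 7 <= 1 / 2)%R.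

Local Notation h := (f \o vtx m (i + 10 * m)).

Lemma local_constraints_hold p : 3 < p.2 -> all (holds h) (local_constraints p).
Proof.
move=> p_gt3; have p_gt1 : 1 < p.2 by apply: ltn_trans p_gt3.
rewrite /= -!card_nbr2_vtx // andbT; apply/and3P; split; apply/implyP => /eqP fp.
- exact: nbr2_gt0 f_gamma.1 fp.
- by rewrite gamma_one_nbr2 ?cards0.
have [nbr0 priv] := gamma_two_private_nbrs f_gamma f_min (vtx_noloop _ m_gt4 p_gt1)
  (eq_leq (deg_vtx _ m_gt4 p_gt1)) fp.
by rewrite nbr0 cards0 -card_private_nbrs_vtx.
Qed.

Lemma window_pair_holds p q : p \in window -> q \in window ->
  distinct_mod (period m.+1) p q -> holds h (RPair (pos_star p) (pos_star q)).
Proof.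
move=> p_win q_win pq; have gt1 r : r \in window -> 1 < r.2.
  by move/window_pos/andP => [r_ge _]; apply: leq_trans r_ge.
rewrite /= -!twice_r_vtx ?gt1 //; apply: twice_r_pair f_gamma.1 r_le _ _ _.
- exact: inVp_vtx.
- exact: inVp_vtx.
- exact: vtx_window_neq.
Qed.

Lemma window_constraints_hold :
  f (vtx m (i + 10 * m) (true, 13)) = 2 -> all (holds h) (window_constraints (period m.+1)).
Proof.
move=> u2; rewrite /window_constraints -cat1s 2!all_cat; apply/and3P; split; first by rewrite /= u2.
  have order_ok : all (fun p : pos => 3 < p.2) search_order by [].
  rewrite all_flatten all_map; apply: sub_all order_ok => p.
  exact: local_constraints_hold.
rewrite all_map all_filter; apply/all_allpairsP => p q p_win q_win /=.
by apply/implyP; apply: window_pair_holds.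
Qed.

Lemma center_not_two : f (vtx m (i + 10 * m) (true, 13)) <> 2.
Proof.
move=> u2; have cs_hold : all (holds h)
    (map (cmap (normp (period m.+1))) (window_constraints (period m.+1))).
  rewrite all_map; apply: sub_all (window_constraints_hold u2) => c /=.
  rewrite holds_cmap => c_holds.
  by rewrite (holds_eq_in (h2 := h)) // => p _ /=; rewrite vtx_normp.
have h_le2 p : h p <= 2 := f_gamma.1.1 _.
have := refutation_period m_gt4; rewrite /refutation => refuted.
by case/negP: (refutes_sound (slots (period m.+1)) h_le2 cs_hold).
Qed.

End Validity.

Lemma vtx_center m i (y : 'I_m.+1) :
  val y = (i + 3) %% m.+1 -> (true, y) = vtx m (i + 10 * m) (true, 13).
Proof.
move=> y_idx; apply/eqP; rewrite vtxE eqxx /= y_idx.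
by rewrite (_ : 13 + (i + 10 * m) = 10 * m.+1 + (i + 3)) ?modnMDl //; lia.
Qed.

Local Open Scope ring_scope.

Theorem lemma2p7 (n : nat) (f : gpV n -> nat) :
  (5 <= n)%N ->
  is_gammaR_fun n 2 f ->
  (forall g : gpV n -> nat, is_gammaR_fun n 2 g -> (#|V2 n f| <= #|V2 n g|)%N) ->
  forall i : nat,
    r_f_Vp n 2 f i 7 <= 1 / 2 ->
    forall w : gpV n, u_vtx w -> val w.2 = ((i + 3) %% n)%N -> w \notin V2 n f.
Proof.
case: n f => [|m] f // m_gt4 f_gamma f_min i r_le [[] y] // _ /= /vtx_center ->.
by rewrite inE; apply/eqP; apply: center_not_two.
Qed.
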